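(* Let $\mathbb{U}_{n,G}$ be the class of all unitary $n$-qubit channels of gate complexity at most $G$, and let $\varepsilon<1/2$. Any online learner for $\mathbb{U}_{n,G}$ makes $\Omega(\min\{2^n,\sqrt{G}\})$ many $\varepsilon$-mistakes against a worst-case adversary. This remains true even if the adversary is forced to decide on a channel in $\mathbb{U}_{n,G}$ before the interaction with the learner.
   Context: A unitary $n$-qubit channel $\rho\mapsto U\rho U^\dagger$ has gate complexity at most $G$ if it can be written as a composition of at most $G$ two-qubit gate channels, each acting on some pair of the $n$ qubits (identity elsewhere). Online learning a class $\mathsf{C}$: in each round the adversary presents a channel test operator $E_{A,B}$ ($E_{A,B}\geq0$ on two $n$-qubit systems with $E_{A,B}\leq\sigma_A\otimes\mathbb{1}_B$ for some density operator $\sigma_A$), the learner predicts a value in $[0,1]$ based on past information, and the adversary reveals the true value $\mathrm{Tr}[E_{A,B}C^{\mathcal{N}}_{A,B}]$ for the target $\mathcal{N}\in\mathsf{C}$, with $C^{\mathcal{N}}_{A,B}=\sum_{i,j}|i\rangle\langle j|\otimes\mathcal{N}(|i\rangle\langle j|)$. An $\varepsilon$-mistake is a round where the prediction differs from the true value by more than $\varepsilon$. *)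

From HB Require Import structures.
From mathcomp Require Import all_boot all_order all_algebra.
From mathcomp Require Import reals.
From mathcomp Require Import complex.
From mathcomp Require mxtens.
From Stdlib Require List.

Unset Implicit Arguments.
Unset Strict Implicit.
Unset Printing Implicit Defensive.

Import Order.TTheory GRing.Theory Num.Theory.
Local Open Scope ring_scope.

Section Quantum.
Variable R : realType.
Local Notation C := (R[i]).

Definition adj {m p} (M : 'M[C]_(m, p)) : 'M[C]_(p, m) := (map_mx Num.conj M)^T.

Definition psdmx {d} (M : 'M[C]_d) : Prop :=
  adj M = M /\ forall v : 'cV[C]_d, 0 <= (adj v *m M *m v) 0 0.

Definition density {d} (s : 'M[C]_d) : Prop := psdmx s /\ \tr s = 1.

Definition unitary {d} (U : 'M[C]_d) : Prop := U *m adj U = 1%:M.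

Definition qdim (n : nat) : nat := 2 ^ n.

Definition qbit (k x : nat) : nat := odd (x %/ 2 ^ k).

Definition loc2 (i j x : nat) : 'I_4 := inord (2 * qbit i x + qbit j x).

Definition embed_gate (n i j : nat) (V : 'M[C]_4) : 'M[C]_(qdim n) :=
  \matrix_(x, y)
    (if [forall k : 'I_n, ((k != i :> nat) && (k != j :> nat)) ==>
                          (qbit k x == qbit k y)]
     then V (loc2 i j x) (loc2 i j y) else 0).

Record gate (n : nat) := Gate { gq1 : 'I_n; gq2 : 'I_n; gmat : 'M[C]_4 }.
Arguments gq1 {n}.
Arguments gq2 {n}.
Arguments gmat {n}.

Definition gate_ok {n} (g : gate n) : Prop :=
  gq1 g != gq2 g /\ unitary (gmat g).

Definition gate_unitary {n} (g : gate n) : 'M[C]_(qdim n) :=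
  embed_gate n (gq1 g) (gq2 g) (gmat g).

Definition gate_complexity_le (n G : nat) (U : 'M[C]_(qdim n)) : Prop :=
  exists gs : seq (gate n),
    [/\ (size gs <= G)%N, (forall g, List.In g gs -> gate_ok g) &
        U = foldr (fun g M => gate_unitary g *m M) 1%:M gs].

(* the class U_{n,G} of unitary channels rho |-> U rho U^dagger,
   represented by their unitaries *)
Definition unitary_class (n G : nat) (U : 'M[C]_(qdim n)) : Prop :=
  unitary U /\ gate_complexity_le n G U.

Definition uchannel {d} (U : 'M[C]_d) (rho : 'M[C]_d) : 'M[C]_d :=
  U *m rho *m adj U.

Definition choi {d} (N : 'M[C]_d -> 'M[C]_d) : 'M[C]_(d * d) :=
  \sum_(i < d) \sum_(j < d)
     mxtens.tensmx (delta_mx i j : 'M[C]_d) (N (delta_mx i j)).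

Definition test_op {d} (E : 'M[C]_(d * d)) : Prop :=
  psdmx E /\ exists sigma : 'M[C]_d,
    density sigma /\ psdmx (mxtens.tensmx sigma (1%:M : 'M[C]_d) - E).

Definition test_value {d} (E : 'M[C]_(d * d)) (N : 'M[C]_d -> 'M[C]_d) : C :=
  \tr (E *m choi N).

(* a (deterministic) online learner: from the past information (the test
   operators presented so far together with their revealed true values)
   and the current test operator, it predicts a value *)
Definition learner (d : nat) :=
  seq ('M[C]_(d * d) * C) -> 'M[C]_(d * d) -> R.

Fixpoint mistakes {d} (L : learner d) (N : 'M[C]_d -> 'M[C]_d) (eps : R)
    (hist : seq ('M[C]_(d * d) * C)) (Es : seq 'M[C]_(d * d)) : nat :=
  match Es with
  | [::] => 0%N
  | E :: Es' =>
      let v := test_value E N in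
      (((eps%:C)%C < `|((L hist E)%:C)%C - v|)%R +
       mistakes L N eps (rcons hist (E, v)) Es')%N
  end.

End Quantum.

(* Fix a reference basis state z0 and points z_1, ..., z_K.  If for every sign
   pattern b some diagonal circuit with at most G gates fixes |z0> and maps |z_i>
   to (-1)^(1 - b_i) |z_i>, then the test P_i (x) P_i, with P_i the projector onto
   (|z0> + |z_i>)/sqrt 2, takes the value b_i on that circuit's channel.  The
   adversary reveals value 1 exactly when the learner predicts at most eps, so
   every round is an eps-mistake (eps < 1/2), and only at the end commits to the
   circuit realising the revealed pattern: K mistakes.

   On the 2^m - 1 nonzero basis states of m qubits every sign pattern is
   realised with 2^m (2m + 1) gates: expand the pattern over the parities a.z,
   implement the phase of each parity by a fan of CNOTs into a spare qubit, one
   phase gate and the same fan again, and take as phases powers of a primitive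
   2^(m+1)-th root of unity weighted by the Walsh coefficients of the pattern.
   The largest m < n with 2^m (2m + 1) <= G gives K >= min(2^n, sqrt G) / 5;
   for 0 < G < 6 a single phase gate gives K = 1. *)

From HB Require Import structures.
From mathcomp Require Import all_boot all_order all_algebra.
From mathcomp Require Import reals complex.
From mathcomp Require mxtens.
From mathcomp Require Import zify ring lra.
From Stdlib Require List.

Set Implicit Arguments.
Unset Strict Implicit.
Unset Printing Implicit Defensive.

Import Order.TTheory GRing.Theory Num.Theory.
Local Open Scope ring_scope.

Section BinaryDigits.
Local Open Scope nat_scope.

Definition bitn (k x : nat) : bool := odd (x %/ 2 ^ k).

Lemma qbitE k x : qbit k x = bitn k x.
Proof. by []. Qed.

Lemma bitn0 x : bitn 0 x = odd x.
Proof. by rewrite /bitn expn0 divn1. Qed.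

Lemma bitnS k x : bitn k.+1 x = bitn k (x %/ 2).
Proof. by rewrite /bitn expnS divnMA. Qed.

Lemma bitn_small k x : x < 2 ^ k -> bitn k x = false.
Proof. by move=> ltx; rewrite /bitn divn_small. Qed.

Lemma bitn_inj n x y : x < 2 ^ n -> y < 2 ^ n ->
  (forall k, k < n -> bitn k x = bitn k y) -> x = y.
Proof.
elim: n x y => [|n IHn] x y.
  by rewrite expn0 !ltnS !leqn0 => /eqP -> /eqP ->.
move=> ltx lty eq_bits; have := eq_bits 0 isT; rewrite !bitn0 => eq_odd.
have eq_half : x %/ 2 = y %/ 2.
  apply: IHn; rewrite ?ltn_divLR -?expnSr // => k ltk.
  by rewrite -!bitnS; apply: eq_bits.
by rewrite (divn_eq x 2) (divn_eq y 2) eq_half !modn2 eq_odd.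
Qed.

Lemma eq_ord_bits n (x y : 'I_(2 ^ n)) :
  (x == y) = [forall k : 'I_n, bitn k x == bitn k y].
Proof.
apply/eqP/forallP => [-> //|eq_bits]; apply: val_inj => /=.
apply: (bitn_inj (ltn_ord x) (ltn_ord y)) => k ltk.
exact/eqP/(eq_bits (Ordinal ltk)).
Qed.

Definition from_bits (n : nat) (beta : nat -> bool) : nat :=
  \sum_(k < n) beta k * 2 ^ k.

Lemma from_bitsS n beta :
  from_bits n.+1 beta = beta 0 + from_bits n (fun k => beta k.+1) * 2.
Proof.
rewrite /from_bits big_ord_recl big_distrl expn0 muln1; congr (_ + _).
by apply: eq_bigr => k _; rewrite lift0 expnS mulnCA [LHS]mulnC.
Qed.

Lemma from_bits_lt n beta : from_bits n beta < 2 ^ n.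
Proof.
elim: n beta => [|n IHn] beta; first by rewrite /from_bits big_ord0.
by rewrite from_bitsS expnS; have := IHn (fun k => beta k.+1); case: (beta 0) => /=; lia.
Qed.

Lemma bitn_from_bits n beta k : k < n -> bitn k (from_bits n beta) = beta k.
Proof.
elim: n beta k => [|n IHn] beta [|k] //= ltk; rewrite from_bitsS.
  by rewrite bitn0 oddD oddM andbF addbF oddb.
by rewrite bitnS divnDMl // divn_small ?add0n ?IHn //; case: (beta 0).
Qed.

Definition ord_of_bits n (beta : nat -> bool) : 'I_(2 ^ n) :=
  Ordinal (from_bits_lt n beta).

End BinaryDigits.

Section ParityCharacters.

Definition dotn (m a z : nat) : bool := odd (\sum_(s < m) bitn s a * bitn s z)%N.

Lemma dotnS m a z : dotn m.+1 a z = (odd a && odd z) (+) dotn m (a %/ 2) (z %/ 2).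
Proof.
rewrite /dotn big_ord_recl oddD oddM !bitn0 !oddb; congr (_ (+) odd _).
by apply: eq_bigr => s _; rewrite lift0 !bitnS.
Qed.

Lemma dotn0 m a : dotn m a 0 = false.
Proof. by rewrite /dotn big1 // => s _; rewrite /bitn div0n muln0. Qed.

Lemma sum_nat_double (V : nmodType) (F : nat -> V) N :
  \sum_(0 <= a < N.*2) F a = \sum_(0 <= a < N) (F a.*2 + F a.*2.+1).
Proof.
elim: N => [|N IHN]; first by rewrite !big_geq.
by rewrite doubleS !big_nat_recr //= IHN addrA.
Qed.

Lemma sum_sign_dotn m z z' : (z < 2 ^ m)%N -> (z' < 2 ^ m)%N ->
  \sum_(0 <= a < 2 ^ m) (-1) ^+ dotn m a z * (-1) ^+ dotn m a z' = (2 ^ m * (z == z'))%:R :> int.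
Proof.
elim: m z z' => [|m IHm] z z'.
  by rewrite expn0 !ltnS !leqn0 => /eqP -> /eqP ->; rewrite big_nat1 !dotn0.
rewrite !expnS !mul2n => ltz ltz'.
have lt_half x : (x < (2 ^ m).*2)%N -> (x %/ 2 < 2 ^ m)%N by rewrite -mul2n ltn_divLR // mulnC.
have halfK a : (a.*2 %/ 2 = a)%N /\ (a.*2.+1 %/ 2 = a)%N by split; lia.
rewrite sum_nat_double.
under eq_bigr => a _.
  rewrite !dotnS /= odd_double (halfK a).1 (halfK a).2 /= !signr_addb.
  have -> : forall e e' s s' : int, s * s' + e * s * (e' * s') = (1 + e * e') * (s * s').
    by move=> e e' s s'; ring.
  over.
rewrite -mulr_sumr IHm ?lt_half //.
have -> : (z == z') = (odd z == odd z') && (z %/ 2 == z' %/ 2)%N.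
  apply/eqP/andP => [->//|[/eqP eq_odd /eqP eq_half]].
  by rewrite (divn_eq z 2) (divn_eq z' 2) eq_half !modn2 eq_odd.
by case: (odd z); case: (odd z'); case: (_ == _); rewrite /= ?muln0 ?muln1 ?expr0 ?expr1; lia.
Qed.

(* Scaled Walsh coefficients of B, normalised so that summing them over the
   odd parities a.z recovers B z - B 0. *)
Definition parity_weight m (B : nat -> bool) (a : nat) : int :=
  - 2 * \sum_(0 <= z < 2 ^ m) (B z)%:R * (-1) ^+ dotn m a z.

Lemma sum_parity_weight m (B : nat -> bool) z : (z < 2 ^ m)%N ->
  \sum_(0 <= a < 2 ^ m) (dotn m a z)%:R * parity_weight m B a =
  (2 ^ m)%:R * ((B z)%:R - (B 0%N)%:R).
Proof.
move=> ltz; rewrite /parity_weight.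
under eq_bigr => a _ do rewrite mulrA mulr_sumr.
rewrite exchange_big_nat /=.
have pick x : (x < 2 ^ m)%N ->
    \sum_(0 <= z' < 2 ^ m) (B z')%:R * (2 ^ m * (x == z'))%:R = (2 ^ m)%:R * (B x)%:R :> int.
  move=> ltx; rewrite (bigD1_seq x) ?mem_index_iota ?iota_uniq //= eqxx muln1 mulrC.
  by rewrite big1 ?addr0 // => z' /negbTE; rewrite eq_sym => ->; rewrite muln0 mulr0.
rewrite mulrBr -pick // -(pick 0%N) ?expn_gt0 // -sumrB.
apply: eq_big_nat => z' /andP[_ ltz']; rewrite -!sum_sign_dotn ?expn_gt0 // !mulr_sumr -sumrB.
by apply: eq_bigr => a _; rewrite dotn0 expr0 mul1r [(-1) ^+ dotn m a z]signrE -mul2n natrM; ring.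
Qed.

End ParityCharacters.

Section MonomialMatrices.
Variable R : pzRingType.

Definition monomx d (psi : 'I_d -> 'I_d) (phi : 'I_d -> R) : 'M[R]_d :=
  \matrix_(x, y) ((x == psi y)%:R * phi y).

Lemma mul_monomx d (psi1 psi2 : 'I_d -> 'I_d) (phi1 phi2 : 'I_d -> R) :
  monomx psi1 phi1 *m monomx psi2 phi2 =
  monomx (psi1 \o psi2) (fun y => phi1 (psi2 y) * phi2 y).
Proof.
apply/matrixP => x y; rewrite !mxE (bigD1 (psi2 y)) //= big1 => [|k /negbTE nek].
  by rewrite !mxE eqxx mul1r addr0 mulrA.
by rewrite !mxE nek mul0r mulr0.
Qed.

Lemma monomx1 d : 1%:M = monomx (@id 'I_d) (fun _ => 1).
Proof. by apply/matrixP => x y; rewrite !mxE mulr1. Qed.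

Lemma eq_monomx d (psi1 psi2 : 'I_d -> 'I_d) (phi1 phi2 : 'I_d -> R) :
  psi1 =1 psi2 -> phi1 =1 phi2 -> monomx psi1 phi1 = monomx psi2 phi2.
Proof. by move=> eq_psi eq_phi; apply/matrixP => x y; rewrite !mxE eq_psi eq_phi. Qed.

End MonomialMatrices.

Section TwoQubitGates.
Variable R : realType.
Local Notation C := R[i].

Lemma monomx_unitary d (psi : 'I_d -> 'I_d) (phi : 'I_d -> C) :
  involutive psi -> (forall y, `|phi y| = 1) -> unitary R (monomx psi phi).
Proof.
move=> psiK unit_phi; apply/matrixP => x y.
rewrite !mxE (bigD1 (psi x)) //= big1 => [|k nek]; last first.
  have /negbTE nex : x != psi k by apply: contra nek => /eqP ->; rewrite psiK.
  by rewrite !mxE nex !mul0r.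
rewrite !mxE psiK eqxx mul1r addr0 rmorphM /= rmorph_nat mulrCA -normCK unit_phi.
by rewrite expr1n mulr1 eq_sym; case: (x == y).
Qed.

Definition hi4 (p : 'I_4) : bool := (2 <= p)%N.
Definition lo4 (p : 'I_4) : bool := odd p.

Definition pair4 (h l : bool) : 'I_4 := inord (2 * h + l).

Lemma hi4_pair h l : hi4 (pair4 h l) = h.
Proof. by rewrite /hi4 inordK; case: h; case: l. Qed.

Lemma lo4_pair h l : lo4 (pair4 h l) = l.
Proof. by rewrite /lo4 inordK; case: h; case: l. Qed.

Lemma pair4_hi_lo p : pair4 (hi4 p) (lo4 p) = p.
Proof. by apply: val_inj; case: p => [[|[|[|[|p]]]] ltp] //=; rewrite inordK. Qed.

Lemma eq_pair4 h l p : (pair4 h l == p) = (h == hi4 p) && (l == lo4 p).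
Proof.
apply/eqP/andP => [<-|[/eqP -> /eqP ->]]; last exact: pair4_hi_lo.
by rewrite hi4_pair lo4_pair.
Qed.

Lemma loc2E i j x : loc2 i j x = pair4 (bitn i x) (bitn j x).
Proof. by []. Qed.

Definition embed_map n (i j : nat) (f : 'I_4 -> 'I_4) (y : 'I_(qdim n)) : 'I_(qdim n) :=
  let p := f (loc2 i j y) in
  ord_of_bits n (fun k => if k == i then hi4 p else if k == j then lo4 p else bitn k y).

Lemma bitn_embed_map n i j f (y : 'I_(qdim n)) k : (k < n)%N ->
  bitn k (embed_map i j f y) =
  if k == i then hi4 (f (loc2 i j y)) else if k == j then lo4 (f (loc2 i j y)) else bitn k y.
Proof. exact: bitn_from_bits. Qed.

Lemma embed_gate_monomx n (i j : 'I_n) (f : 'I_4 -> 'I_4) (c : 'I_4 -> C) :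
  i != j ->
  embed_gate R n i j (monomx f c) = monomx (embed_map i j f) (fun y => c (loc2 i j y)).
Proof.
move=> neij; have {}neij : (i : nat) != j by [].
apply/matrixP => x y; rewrite !mxE.
suff -> : (x == embed_map i j f y) =
    [forall k : 'I_n, ((k != i :> nat) && (k != j :> nat)) ==> (qbit k x == qbit k y)]
    && (loc2 i j x == f (loc2 i j y)) by case: ifP; rewrite ?mul0r.
rewrite eq_ord_bits loc2E eq_pair4.
apply/forallP/andP => [eq_bits|[/forallP eq_out /andP[/eqP eq_i /eqP eq_j]] k].
  have := eq_bits i; have := eq_bits j.
  rewrite !bitn_embed_map // !eqxx [(j : nat) == i]eq_sym (negbTE neij) => -> ->.
  split=> //; apply/forallP => k; apply/implyP => /andP[neki nekj].
  by have := eq_bits k; rewrite bitn_embed_map // (negbTE neki) (negbTE nekj) !qbitE => /eqP ->.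
rewrite bitn_embed_map //; case: ifP => [/eqP ->|neki]; first by rewrite eq_i.
case: ifP => [/eqP ->|nekj]; first by rewrite eq_j.
by have := eq_out k; rewrite neki nekj !qbitE; case: (bitn k x); case: (bitn k y).
Qed.

End TwoQubitGates.

Lemma In_mem (T : eqType) (x : T) s : List.In x s -> x \in s.
Proof. by elim: s => //= y s IHs [->|/IHs]; rewrite inE ?eqxx // => ->; rewrite orbT. Qed.

Section Circuits.
Variable R : realType.
Local Notation C := R[i].
Variable n : nat.

Definition cnot4 (p : 'I_4) : 'I_4 := pair4 (hi4 p) (lo4 p (+) hi4 p).

Lemma cnot4K : involutive cnot4.
Proof.
by move=> p; rewrite /cnot4 hi4_pair lo4_pair -addbA addbb addbF pair4_hi_lo.
Qed.

Definition cnot_mx : 'M[C]_4 := monomx cnot4 (fun _ => 1).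
(* Only the first qubit is acted upon: a gate always names two distinct qubits. *)
Definition phase_mx (w : C) : 'M[C]_4 := monomx id (fun p => if hi4 p then w else 1).

Definition cnot_gate (s t : 'I_n) : gate R n := Gate R n s t cnot_mx.
Definition phase_gate (t u : 'I_n) (w : C) : gate R n := Gate R n t u (phase_mx w).

Definition cnot_map (s t : 'I_n) : 'I_(qdim n) -> 'I_(qdim n) := embed_map s t cnot4.

Lemma bitn_cnot_map (s t : 'I_n) y k : s != t -> (k < n)%N ->
  bitn k (cnot_map s t y) = if k == t then bitn t y (+) bitn s y else bitn k y.
Proof.
move=> nest ltk; rewrite bitn_embed_map // /cnot4 hi4_pair lo4_pair loc2E hi4_pair lo4_pair.
case: eqP => [-> | neks]; last by case: eqP => // ->.
by rewrite ifN_eq // eq_sym.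
Qed.

Lemma cnot_gateE s t : s != t ->
  gate_unitary R (cnot_gate s t) = monomx (cnot_map s t) (fun _ => 1).
Proof. exact: embed_gate_monomx. Qed.

Lemma phase_gateE t u w : t != u ->
  gate_unitary R (phase_gate t u w) = monomx id (fun y => if bitn t y then w else 1).
Proof.
move=> netu; rewrite /gate_unitary embed_gate_monomx //.
apply: eq_monomx => y; last by rewrite loc2E hi4_pair.
apply/eqP; rewrite eq_ord_bits; apply/forallP => k.
rewrite bitn_embed_map //= loc2E hi4_pair lo4_pair.
by case: ifP => [/eqP ->|_] //; case: ifP => [/eqP ->|].
Qed.

Lemma cnot_gate_ok s t : s != t -> gate_ok R (cnot_gate s t).
Proof. by split=> //; apply: monomx_unitary cnot4K _ => _; rewrite normr1. Qed.

Lemma phase_gate_ok t u w : t != u -> `|w| = 1 -> gate_ok R (phase_gate t u w).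
Proof.
by move=> netu unit_w; split=> //; apply: monomx_unitary => // p; case: ifP; rewrite ?normr1.
Qed.

Definition circuit_mx (gs : seq (gate R n)) : 'M[C]_(qdim n) :=
  foldr (fun g M => gate_unitary R g *m M) 1%:M gs.

Lemma circuit_mx_cat gs1 gs2 : circuit_mx (gs1 ++ gs2) = circuit_mx gs1 *m circuit_mx gs2.
Proof. by elim: gs1 => [|g gs IHgs] /=; rewrite ?mul1mx // IHgs mulmxA. Qed.

Definition gates_ok (gs : seq (gate R n)) : Prop := forall g, List.In g gs -> gate_ok R g.

Lemma gates_ok_cat gs1 gs2 : gates_ok gs1 -> gates_ok gs2 -> gates_ok (gs1 ++ gs2).
Proof. by move=> ok1 ok2 g /(@List.in_app_or _ _ _ _)[/ok1|/ok2]. Qed.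

Lemma circuit_flatten_diag (I : Type) (s : seq I) (F : I -> seq (gate R n))
    (phi : I -> 'I_(qdim n) -> C) :
  (forall a, circuit_mx (F a) = monomx id (phi a)) ->
  circuit_mx (flatten (map F s)) = monomx id (fun y => \prod_(a <- s) phi a y).
Proof.
move=> circF; elim: s => [|a s IHs] /=.
  by rewrite monomx1; apply: eq_monomx => // y; rewrite big_nil.
rewrite circuit_mx_cat IHs circF mul_monomx.
by apply: eq_monomx => // y; rewrite big_cons.
Qed.

Lemma gates_ok_flatten (I : Type) (s : seq I) (F : I -> seq (gate R n)) :
  (forall a, gates_ok (F a)) -> gates_ok (flatten (map F s)).
Proof. by move=> okF; elim: s => [|a s IHs] //=; apply: gates_ok_cat. Qed.

Definition parity (ls : seq 'I_n) (y : nat) : bool := odd (\sum_(s <- ls) bitn s y)%N.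

Definition cnot_fan (ls : seq 'I_n) (t : 'I_n) : seq (gate R n) :=
  [seq cnot_gate s t | s <- ls].

Definition fan_map (ls : seq 'I_n) (t : 'I_n) : 'I_(qdim n) -> 'I_(qdim n) :=
  foldr (fun s f => cnot_map s t \o f) id ls.

Section Fan.
Variables (ls : seq 'I_n) (t : 'I_n).
Hypothesis t_notin_ls : t \notin ls.

Lemma circuit_cnot_fan : circuit_mx (cnot_fan ls t) = monomx (fan_map ls t) (fun _ => 1).
Proof.
elim: ls t_notin_ls => [|s ls' IHls]; rewrite ?inE /= ?monomx1 // negb_or => /andP[nets /IHls ->].
by rewrite cnot_gateE 1?eq_sym // mul_monomx mulr1.
Qed.

Lemma bitn_fan_map y k : (k < n)%N ->
  bitn k (fan_map ls t y) = if k == t then bitn t y (+) parity ls y else bitn k y.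
Proof.
rewrite /parity; elim: ls t_notin_ls k => [|s ls' IHls] + k ltk /=.
  by rewrite big_nil addbF; case: eqP => // ->.
rewrite inE negb_or eq_sym => /andP[nest t_notin'].
have nest_nat : (s : nat) != t by [].
rewrite bitn_cnot_map // !IHls ?ltn_ord // (negbTE nest_nat).
case: eqP => // _; rewrite eqxx.
by rewrite big_cons oddD oddb [bitn s y (+) _]addbC addbA.
Qed.

Lemma parity_fan_map y : parity ls (fan_map ls t y) = parity ls y.
Proof.
congr odd; apply: eq_big_seq => s s_in; rewrite bitn_fan_map // ifN //.
by apply: contraNneq t_notin_ls => /val_inj <-.
Qed.

Lemma fan_mapK : involutive (fan_map ls t).
Proof.
move=> y; apply/eqP; rewrite eq_ord_bits; apply/forallP => k.
rewrite !bitn_fan_map // parity_fan_map; case: ((k : nat) =P t) => [->|_] //.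
by rewrite eqxx -addbA addbb addbF.
Qed.

Definition parity_phase_gates (u : 'I_n) (w : C) : seq (gate R n) :=
  cnot_fan ls t ++ phase_gate t u w :: cnot_fan ls t.

Lemma circuit_parity_phase u w : t != u ->
  circuit_mx (parity_phase_gates u w) =
  monomx id (fun y => if bitn t y (+) parity ls y then w else 1).
Proof.
move=> netu; rewrite circuit_mx_cat /= circuit_cnot_fan phase_gateE // !mul_monomx.
apply: eq_monomx => y /=; first exact: fan_mapK.
by rewrite bitn_fan_map // eqxx mulr1 mul1r.
Qed.

Lemma parity_phase_gates_ok u w : t != u -> `|w| = 1 -> gates_ok (parity_phase_gates u w).
Proof.
move=> netu unit_w; have fan_ok : gates_ok (cnot_fan ls t).
  move=> g /List.in_map_iff[s [<- /In_mem s_in]].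
  by apply: cnot_gate_ok; apply: contraNneq t_notin_ls => <-.
by apply: gates_ok_cat => // g [<-|/fan_ok //]; exact: phase_gate_ok.
Qed.

Lemma size_parity_phase_gates u w : size (parity_phase_gates u w) = (size ls).*2.+1.
Proof. by rewrite size_cat /= size_map addnS addnn. Qed.

End Fan.
End Circuits.

Section FourierCircuit.
Variables (R : realType) (n m : nat) (t u : 'I_n).
Local Notation C := R[i].
Hypotheses (le_m_t : (m <= t)%N) (netu : t != u).

Definition controls (a : nat) : seq 'I_n := [seq s : 'I_n <- enum 'I_n | (s < m)%N && bitn s a].

Lemma t_notin_controls a : t \notin controls a.
Proof. by rewrite mem_filter ltnNge le_m_t. Qed.

Lemma size_controls a : (size (controls a) <= m)%N.
Proof.
rewrite -(size_iota 0 m) -(size_map val); apply: uniq_leq_size.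
  rewrite map_inj_uniq => [|x y]; last exact: val_inj.
  exact/filter_uniq/enum_uniq.
by move=> x /mapP[s]; rewrite mem_filter mem_iota => /andP[/andP[lt_s _] _] ->.
Qed.

Lemma parity_controls a y : parity (controls a) y = dotn m a y.
Proof.
have le_mn : (m <= n)%N := leq_trans le_m_t (ltnW (ltn_ord t)).
rewrite /parity /dotn big_filter big_enum_cond.
rewrite (big_ord_widen n (fun s => bitn s a * bitn s y)%N le_mn).
congr odd; rewrite big_mkcond [RHS]big_mkcond; apply: eq_bigr => s _ /=.
by case: (s < m)%N; case: (bitn s a); rewrite /= ?mul1n.
Qed.
Definition fourier_gates (w : nat -> C) : seq (gate R n) :=
  flatten [seq parity_phase_gates (controls a) t u (w a) | a <- index_iota 0 (2 ^ m)].

Lemma circuit_fourier w :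
  circuit_mx (fourier_gates w) =
  monomx id (fun y => \prod_(0 <= a < 2 ^ m) (if bitn t y (+) dotn m a y then w a else 1)).
Proof.
apply: circuit_flatten_diag => a.
rewrite circuit_parity_phase ?t_notin_controls //.
by apply: eq_monomx => // y; rewrite parity_controls.
Qed.

Lemma fourier_gates_ok w : (forall a, `|w a| = 1) -> gates_ok (fourier_gates w).
Proof.
move=> unit_w; apply: gates_ok_flatten => a.
by apply: parity_phase_gates_ok; rewrite ?t_notin_controls.
Qed.

Lemma size_fourier_gates w : (size (fourier_gates w) <= 2 ^ m * (2 * m + 1))%N.
Proof.
rewrite size_flatten sumnE !big_map.
apply: (@leq_trans (\sum_(0 <= a < 2 ^ m) (2 * m + 1))%N); last by rewrite sum_nat_const_nat subn0.
apply: leq_sum => a _; rewrite size_parity_phase_gates -addn1 -mul2n leq_add2r.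
by rewrite leq_mul2l size_controls orbT.
Qed.

End FourierCircuit.

Lemma norm_exprz (F : numFieldType) (x : F) (k : int) : `|x| = 1 -> `|x ^ k| = 1.
Proof. by move=> norm_x; case: k => k; rewrite ?normfV normrX norm_x expr1n ?invr1. Qed.

Lemma prod_exprz (U : unitRingType) (x : U) (s : seq nat) (P : pred nat) (k : nat -> int) :
  x \is a GRing.unit ->
  \prod_(a <- s) (if P a then x ^ k a else 1) = x ^ (\sum_(a <- s) (P a)%:R * k a).
Proof.
move=> unit_x; elim: s => [|a s IHs]; first by rewrite !big_nil expr0z.
by rewrite !big_cons IHs exprzDr //; case: (P a); rewrite ?mul1r ?mul0r ?expr0z ?mul1r.
Qed.

Section SignPatterns.
Variable C : numClosedFieldType.

Definition root_neg1 (m : nat) : C := (2 ^ m)%N.-root (-1).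

Lemma root_neg1X m : root_neg1 m ^+ (2 ^ m) = -1.
Proof. by rewrite rootCK // expn_gt0. Qed.

Lemma norm_root_neg1 m : `|root_neg1 m| = 1.
Proof.
apply/eqP; rewrite -(@pexpr_eq1 _ _ (2 ^ m)) ?expn_gt0 //.
by rewrite -normrX root_neg1X normrN normr1.
Qed.

Lemma root_neg1_unit m : root_neg1 m \is a GRing.unit.
Proof. by rewrite unitfE -normr_eq0 norm_root_neg1 oner_eq0. Qed.

Definition sign_weights m (B : nat -> bool) (a : nat) : C := root_neg1 m ^ parity_weight m B a.

Lemma norm_sign_weights m B a : `|sign_weights m B a| = 1.
Proof. exact/norm_exprz/norm_root_neg1. Qed.

Lemma prod_sign_weights m (B : nat -> bool) z : B 0%N = false -> (z < 2 ^ m)%N ->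
  \prod_(0 <= a < 2 ^ m) (if dotn m a z then sign_weights m B a else 1) = (-1) ^+ B z.
Proof.
move=> B0 ltz; rewrite prod_exprz ?root_neg1_unit // sum_parity_weight // B0 subr0.
by case: (B z); rewrite ?mulr0 ?expr0z // mulr1 natz -exprnP root_neg1X.
Qed.

End SignPatterns.

Section PositiveMatrices.
Variable R : realType.
Local Notation C := R[i].
Import mxtens.

Lemma adjM m k p (A : 'M[C]_(m, k)) (B : 'M[C]_(k, p)) :
  adj R (A *m B) = adj R B *m adj R A.
Proof. by rewrite /adj map_mxM trmx_mul. Qed.

Lemma adjE m k (A : 'M[C]_(m, k)) i j : adj R A i j = (A j i)^*.
Proof. by rewrite !mxE. Qed.

Lemma adjK m k (A : 'M[C]_(m, k)) : adj R (adj R A) = A.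
Proof. by apply/matrixP => i j; rewrite !mxE conjCK. Qed.

Lemma adj_tens m k p q (A : 'M[C]_(m, k)) (B : 'M[C]_(p, q)) :
  adj R (A *t B) = adj R A *t adj R B.
Proof. by rewrite /adj (map_mxT Num.conj) trmx_tens. Qed.

Lemma psd_gram d k (X : 'M[C]_(d, k)) : psdmx R (X *m adj R X).
Proof.
split=> [|v]; first by rewrite adjM adjK.
have -> : adj R v *m (X *m adj R X) *m v = adj R (adj R X *m v) *m (adj R X *m v).
  by rewrite adjM adjK !mulmxA.
by rewrite !mxE sumr_ge0 // => i _; rewrite !mxE -normCKC exprn_ge0.
Qed.

Lemma psdZ d (r : C) (M : 'M[C]_d) : 0 <= r -> psdmx R M -> psdmx R (r *: M).
Proof.
move=> r_ge0 [herm_M psd_M]; have conj_r : r^* = r by apply/CrealP/ger0_real.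
split=> [|v]; first by apply/matrixP => i j; rewrite !mxE rmorphM /= conj_r -[in RHS]herm_M !mxE.
by rewrite -scalemxAr -scalemxAl mxE mulr_ge0.
Qed.

Lemma tensmxZ m k p q (a b : C) (A : 'M[C]_(m, k)) (B : 'M[C]_(p, q)) :
  (a *: A) *t (b *: B) = (a * b) *: (A *t B).
Proof. by apply/matrixP => i j; rewrite !mxE mulrACA. Qed.

Lemma tensmxBr m k p q (A : 'M[C]_(m, k)) (B B' : 'M[C]_(p, q)) :
  A *t B - A *t B' = A *t (B - B').
Proof. by apply/matrixP => i j; rewrite !mxE mulrBr. Qed.

Lemma psd_tens_gram d1 d2 k1 k2 (X : 'M[C]_(d1, k1)) (Y : 'M[C]_(d2, k2)) :
  psdmx R ((X *m adj R X) *t (Y *m adj R Y)).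
Proof. by rewrite -tensmx_mul -adj_tens; apply: psd_gram. Qed.

Lemma mxtrace_tens m k (A : 'M[C]_m) (B : 'M[C]_k) : \tr (A *t B) = \tr A * \tr B.
Proof.
rewrite /mxtrace mulr_suml; under [RHS]eq_bigr do rewrite mulr_sumr.
rewrite pair_big /= (reindex (@mxtens_index m k)) /=.
  by apply: eq_bigr => [[i j]] _; rewrite tensmxE.
by exists (@mxtens_unindex m k) => x _; [exact: mxtens_indexK | exact: mxtens_unindexK].
Qed.

Lemma mxtrace_mul_delta d (A : 'M[C]_d) i j : \tr (A *m delta_mx i j) = A j i.
Proof.
rewrite /mxtrace (bigD1 j) //= big1 => [|k nekj]; last first.
  by rewrite !mxE big1 // => l _; rewrite !mxE eq_sym (negbTE nekj) andbF mulr0.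
rewrite addr0 !mxE (bigD1 i) //= big1 => [|l neli]; first by rewrite !mxE !eqxx mulr1 addr0.
by rewrite !mxE (negbTE neli) mulr0.
Qed.

Lemma test_value_tens d (A B U : 'M[C]_d) :
  test_value R (A *t B) (uchannel R U) = \sum_i \sum_j A j i * (adj R U *m B *m U) j i.
Proof.
rewrite /test_value /choi mulmx_sumr raddf_sum; apply: eq_bigr => i _.
rewrite mulmx_sumr raddf_sum; apply: eq_bigr => j _ /=.
rewrite tensmx_mul mxtrace_tens mxtrace_mul_delta; congr (_ * _).
by rewrite /uchannel !mulmxA mxtrace_mulC !mulmxA mxtrace_mul_delta.
Qed.

Lemma conj_diag_entry d (Phi : 'I_d -> C) (M : 'M[C]_d) j i :
  (adj R (monomx id Phi) *m M *m monomx id Phi) j i = (Phi j)^* * M j i * Phi i.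
Proof.
rewrite mxE (bigD1 i) //= big1 => [|k /negbTE neki]; last by rewrite !mxE neki mul0r mulr0.
rewrite addr0 !mxE eqxx mul1r (bigD1 j) //= big1 => [|l /negbTE nelj].
  by rewrite addr0 !mxE eqxx mul1r.
by rewrite !mxE /= nelj mul0r rmorph0 mul0r.
Qed.

End PositiveMatrices.

Section PairTest.
Variable R : realType.
Local Notation C := R[i].
Import mxtens.
Variables (d : nat) (z0 z1 : 'I_d).
Hypothesis nez : z0 != z1.

Definition in_pair (x : 'I_d) : bool := (x == z0) || (x == z1).
Definition pair_vec : 'cV[C]_d := \col_x (in_pair x)%:R.
Definition pair_proj : 'M[C]_d := 2^-1 *: (pair_vec *m adj R pair_vec).

Lemma pair_projE x y : pair_proj x y = (in_pair x && in_pair y)%:R / 2.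
Proof. by rewrite !mxE big_ord1 !mxE rmorph_nat -natrM mulnb mulrC. Qed.

Lemma sum_in_pair (f : 'I_d -> C) : \sum_x (in_pair x)%:R * f x = f z0 + f z1.
Proof.
rewrite (bigD1 z0) ?inE ?eqxx // (bigD1 z1) /= ?inE ?eqxx ?orbT 1?eq_sym //.
rewrite big1 => [|x /andP[nex1 nex0]]; last by rewrite /in_pair (negbTE nex0) (negbTE nex1) mul0r.
by rewrite /in_pair !eqxx /= orbT !mul1r addr0.
Qed.

Lemma pair_vec_norm : adj R pair_vec *m pair_vec = 2%:M.
Proof.
apply/matrixP => i j; rewrite !ord1 !mxE eqxx mulr1n.
under eq_bigr do rewrite !mxE rmorph_nat -natrM mulnb andbb -[_%:R]mulr1.
by rewrite sum_in_pair.
Qed.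

Lemma pair_proj_herm : adj R pair_proj = pair_proj.
Proof.
apply/matrixP => x y; rewrite adjE !pair_projE.
by rewrite rmorphM /= fmorphV /= !rmorph_nat andbC.
Qed.

Lemma pair_proj_idem : pair_proj *m pair_proj = pair_proj.
Proof.
rewrite /pair_proj -scalemxAl -scalemxAr scalerA !mulmxA -(mulmxA pair_vec).
rewrite pair_vec_norm mul_mx_scalar -scalemxAl scalerA; by congr (_ *: _); field.
Qed.

Lemma pair_proj_density : density R pair_proj.
Proof.
split; first by apply: psdZ; [rewrite invr_ge0 ler0n | exact: psd_gram].
rewrite /mxtrace; under eq_bigr do rewrite pair_projE andbb.
by rewrite sum_in_pair; field.
Qed.

Lemma pair_test_op : test_op R (pair_proj *t pair_proj).
Proof.
have half_ge0 : 0 <= 2^-1 :> C by rewrite invr_ge0 ler0n.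
split; first by rewrite /pair_proj tensmxZ; apply: psdZ; [exact: mulr_ge0 | exact: psd_tens_gram].
exists pair_proj; split; first exact: pair_proj_density.
have gram_compl : 1%:M - pair_proj = (1%:M - pair_proj) *m adj R (1%:M - pair_proj).
  have -> : adj R (1%:M - pair_proj) = 1%:M - pair_proj.
    by rewrite /adj map_mxB map_mx1 raddfB /= trmx1 -/(adj R pair_proj) pair_proj_herm.
  by rewrite mulmxBl !mulmxBr !mul1mx !mulmx1 pair_proj_idem subrr subr0.
rewrite tensmxBr gram_compl -[_ *m adj R _]scale1r.
rewrite -[X in X *t _]/(2^-1 *: (pair_vec *m adj R pair_vec)) tensmxZ.
by apply: psdZ; [rewrite mulr1 | exact: psd_tens_gram].
Qed.

Lemma pair_test_value (Phi : 'I_d -> C) :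
  test_value R (pair_proj *t pair_proj) (uchannel R (monomx id Phi)) =
  (Phi z0 + Phi z1) * (Phi z0 + Phi z1)^* / 4.
Proof.
rewrite test_value_tens.
transitivity (\sum_i (in_pair i)%:R * \sum_j (in_pair j)%:R * ((Phi j)^* * Phi i / 4)).
  apply: eq_bigr => i _; rewrite mulr_sumr; apply: eq_bigr => j _.
  rewrite conj_diag_entry !pair_projE.
  by case: (in_pair i); case: (in_pair j); rewrite /= ?mul0r ?mulr0 ?mul1r //; field.
under eq_bigr do rewrite sum_in_pair.
by rewrite sum_in_pair rmorphD /=; field.
Qed.

End PairTest.

Section Adversary.
Variable R : realType.
Local Notation C := R[i].
Local Open Scope complex_scope.

Lemma normcR (x : R) : `|x%:C| = `|x|%:C.
Proof. by rewrite normc_def /= expr0n /= addr0 sqrtr_sqr. Qed.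

Lemma mistake_on_threshold (eps p : R) : (eps < 1 / 2)%R -> (0 <= p <= 1)%R ->
  ((eps%:C)%C < `|(p%:C)%C - ((p <= eps)%R)%:R|)%R.
Proof.
move=> lt_eps /andP[p_ge0 p_le1].
have -> : (((p <= eps)%R)%:R : C) = ((((p <= eps)%R)%:R : R))%:C by rewrite rmorph_nat.
rewrite -rmorphB /= normcR ltcR; case: (lerP p eps) => /= [le_p_eps|lt_eps_p].
  by rewrite ler0_norm ?subr_le0 //; lra.
by rewrite subr0 ger0_norm.
Qed.

Lemma adversary_forces_mistakes d (L : learner R d) (eps : R)
    (K : ('M[C]_d -> 'M[C]_d) -> Prop) (Es : seq 'M[C]_(d * d)) hist :
  (eps < 1 / 2)%R -> (forall h E, (0 <= L h E <= 1)%R) ->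
  (forall b, size b = size Es -> exists2 N, K N &
     forall i, (i < size Es)%N -> test_value R (nth 0%R Es i) N = ((nth false b i)%:R)%R) ->
  exists2 N, K N & mistakes R L N eps hist Es = size Es.
Proof.
move=> lt_eps L01; elim: Es K hist => [|E Es IHEs] K hist realize_K.
  by have [N KN _] := realize_K [::] erefl; exists N.
pose b0 := (L hist E <= eps)%R.
(* Reveal b0 and keep only the channels consistent with it. *)
pose K' N := K N /\ test_value R E N = (b0%:R)%R.
have [|N [KN val_E] mistakes_Es] := IHEs K' (rcons hist (E, (b0%:R)%R)).
  move=> b size_b; have [|N KN val_N] := realize_K (b0 :: b); first by rewrite /= size_b.
  by exists N => [|i lt_i]; [split=> //; exact: (val_N 0%N) | exact: (val_N i.+1)].
by exists N => //=; rewrite val_E mistakes_Es mistake_on_threshold.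
Qed.

End Adversary.

Section Shattering.
Variable R : realType.
Local Notation C := R[i].
Import mxtens.

Definition sign_shattered n G (z0 : 'I_(qdim n)) (zs : seq 'I_(qdim n)) : Prop :=
  forall b : seq bool, size b = size zs -> exists Phi : 'I_(qdim n) -> C,
    [/\ gate_complexity_le R n G (monomx id Phi), forall y, `|Phi y| = 1, Phi z0 = 1 &
        forall i, (i < size zs)%N -> Phi (nth z0 zs i) = (-1) ^+ (~~ nth false b i)].

Lemma pair_test_value_sign d (z0 z : 'I_d) (Phi : 'I_d -> C) (b : bool) :
  z0 != z -> Phi z0 = 1 -> Phi z = (-1) ^+ (~~ b) ->
  test_value R (pair_proj R z0 z *t pair_proj R z0 z) (uchannel R (monomx id Phi)) = b%:R.
Proof.
move=> nez Phi_z0 Phi_z; rewrite pair_test_value // Phi_z0 Phi_z.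
by move: Phi_z; case: b => _; rewrite /= ?rmorphD ?rmorph1 ?subrr ?mul0r //; field.
Qed.

Lemma shattered_mistakes n G (eps : R) (L : learner R (qdim n)) (z0 : 'I_(qdim n)) zs :
  eps < 1 / 2 -> (forall h E, 0 <= L h E <= 1) ->
  z0 \notin zs -> sign_shattered G z0 zs ->
  exists U, unitary_class R n G U /\
    exists Es, (forall E, List.In E Es -> test_op R E) /\
      mistakes R L (uchannel R U) eps [::] Es = size zs.
Proof.
move=> lt_eps L01 z0_notin shattered.
pose Es := [seq pair_proj R z0 z *t pair_proj R z0 z | z <- zs].
have size_Es : size Es = size zs by rewrite size_map.
pose K N := exists U, unitary_class R n G U /\ N = uchannel R U.
have [|N [U [classU ->]] mistakes_Es] := @adversary_forces_mistakes R _ L eps K Es [::] lt_eps L01.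
  move=> b; rewrite size_Es => size_b.
  have [Phi [cplx_Phi unit_Phi Phi_z0 Phi_zs]] := shattered b size_b.
  exists (uchannel R (monomx id Phi)).
    by exists (monomx id Phi); split=> //; split=> //; exact: monomx_unitary.
  move=> i lt_i; rewrite (nth_map z0) //.
  apply: pair_test_value_sign; rewrite ?Phi_zs //.
  by apply: contraNneq z0_notin => ->; rewrite mem_nth.
exists U; split=> //; exists Es; split; last by rewrite mistakes_Es size_Es.
move=> E /List.in_map_iff[z [<- /In_mem z_in]]; apply: pair_test_op.
by apply: contraNneq z0_notin => ->.
Qed.

End Shattering.

Section ShatteredFamilies.
Variables (R : realType) (n : nat).
Local Notation C := R[i].

Lemma qdim_gt0 : (0 < qdim n)%N.
Proof. exact: expn_gt0. Qed.

Lemma shattered_nil G (z0 : 'I_(qdim n)) : sign_shattered R G z0 [::].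
Proof.
move=> b _; exists (fun _ => 1); split=> // [|y]; last exact: normr1.
by exists [::]; split=> //; rewrite monomx1.
Qed.

Lemma shattered_fourier m G : (0 < m < n)%N -> (2 ^ m * (2 * m + 1) <= G)%N ->
  sign_shattered R G (Ordinal qdim_gt0)
    [seq insubd (Ordinal qdim_gt0) z | z <- iota 1 (2 ^ m - 1)].
Proof.
move=> /andP[m_gt0 lt_mn] size_le b size_b; set z0 := Ordinal qdim_gt0.
pose B z := (0 < z)%N && ~~ nth false b z.-1.
pose w := sign_weights R[i] m B.
pose t : 'I_n := Ordinal lt_mn; pose u : 'I_n := Ordinal (ltn_trans m_gt0 lt_mn).
have le_mt : (m <= t)%N by [].
have netu : t != u by rewrite -(inj_eq val_inj) /= -lt0n.
pose Phi (y : 'I_(qdim n)) := \prod_(0 <= a < 2 ^ m) (if bitn t y (+) dotn m a y then w a else 1).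
have Phi_low (y : 'I_(qdim n)) : (y < 2 ^ m)%N -> Phi y = (-1) ^+ B y.
  by move=> lt_y; rewrite /Phi bitn_small //= prod_sign_weights.
have lt_qdim z : (z < 2 ^ m)%N -> (z < qdim n)%N.
  by move=> lt_z; apply: leq_trans lt_z _; rewrite leq_exp2l // ltnW.
exists Phi; split.
- exists (fourier_gates m t u w); split.
  + exact: leq_trans (size_fourier_gates _ _ _ _) size_le.
  + exact: fourier_gates_ok le_mt netu _ (norm_sign_weights _ _ _).
  + by rewrite [X in _ = X](circuit_fourier le_mt netu).
- by move=> y; rewrite normr_prod big1 // => a _; case: ifP; rewrite ?normr1 ?norm_sign_weights.
- by rewrite Phi_low ?expn_gt0.
move=> i; rewrite size_map size_iota => lt_i.
rewrite (nth_map 0%N) ?size_iota // nth_iota // add1n Phi_low val_insubd lt_qdim //; lia.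
Qed.

Hypothesis two_qubits : (2 <= n)%N.

Lemma one_lt_qdim : (1 < qdim n)%N.
Proof. by rewrite -(expn0 2) ltn_exp2l // ltnW. Qed.

Lemma shattered_single G : (0 < G)%N ->
  sign_shattered R G (Ordinal qdim_gt0) [:: Ordinal one_lt_qdim].
Proof.
move=> G_gt0 b _; pose w : C := (-1) ^+ (~~ nth false b 0).
have w_unit : `|w| = 1 by rewrite normrX normrN normr1 expr1n.
pose q0 : 'I_n := Ordinal (ltnW two_qubits); pose q1 : 'I_n := Ordinal two_qubits.
exists (fun y => if bitn 0 y then w else 1); split=> // [|y|[]//].
  exists [:: phase_gate q0 q1 w]; split=> [||/=]; first by [].
    by move=> g [<-|//]; exact: phase_gate_ok.
  by rewrite mulmx1 phase_gateE.
by case: ifP; rewrite ?normr1.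
Qed.

End ShatteredFamilies.

Lemma fourier_scale n G : (2 <= n)%N -> (6 <= G)%N ->
  exists2 m, (0 < m < n)%N && (2 ^ m * (2 * m + 1) <= G)%N &
    (2 ^ n <= 5 * (2 ^ m - 1))%N || (G <= (5 * (2 ^ m - 1)) ^ 2)%N.
Proof.
move=> n_ge2 G_ge6; pose P m := (0 < m < n)%N && (2 ^ m * (2 * m + 1) <= G)%N.
have P1 : P 1%N by rewrite /P n_ge2.
have P_bound m : P m -> (m <= n)%N by case/andP => /andP[_ /ltnW].
have [m Pm max_m] := ex_maxnP (ex_intro P 1%N P1) P_bound.
exists m => //; have /andP[/andP[m_gt0 lt_mn] _] := Pm.
have m_lt_pow : (m < 2 ^ m)%N := ltn_expl m (ltnSn 1).
have [lt_m1n|] := ltnP m.+1 n; last first.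
  move=> le_nm1; have -> : n = m.+1 by lia.
  by rewrite expnS; move: m_lt_pow; lia.
have : ~~ P m.+1 by apply/negP => /max_m; rewrite ltnn.
rewrite /P lt_m1n /= -ltnNge expnS => G_lt; apply/orP; right.
by move: m_lt_pow G_lt; set x := (2 ^ m)%N; nia.
Qed.

Lemma exists_large_shattered (R : realType) n G : (2 <= n)%N ->
  exists (z0 : 'I_(qdim n)) zs, [/\ z0 \notin zs, sign_shattered R G z0 zs &
    (2 ^ n <= 5 * size zs)%N || (G <= (5 * size zs) ^ 2)%N].
Proof.
move=> n_ge2; set z0 : 'I_(qdim n) := Ordinal (qdim_gt0 n).
have [G_ge6|G_lt6] := leqP 6 G; last first.
  have [-> | G_gt0] := posnP G.
    by exists z0, [::]; split; [| exact: shattered_nil | rewrite orbT].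
  exists z0, [:: Ordinal (one_lt_qdim n_ge2)]; split.
  - by rewrite inE -(inj_eq val_inj).
  - exact: shattered_single.
  by apply/orP; right; rewrite /= (leq_trans (ltnW G_lt6)).
have [m /andP[m_range size_le] scale] := fourier_scale n_ge2 G_ge6.
exists z0, [seq insubd z0 z | z <- iota 1 (2 ^ m - 1)]; split.
- apply/mapP => -[z]; rewrite mem_iota subnKC ?expn_gt0 // => /andP[z_gt0 lt_z].
  have lt_qdim : (z < qdim n)%N.
    by apply: leq_trans lt_z _; rewrite leq_exp2l // ltnW; case/andP: m_range.
  by move/(congr1 val); rewrite val_insubd lt_qdim /=; lia.
- exact: shattered_fourier.
by rewrite size_map size_iota.
Qed.

Lemma min_pow_sqrt_le (R : realType) (n G k : nat) :
  (2 ^ n <= 5 * k)%N || (G <= (5 * k) ^ 2)%N ->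
  1 / 5 * Num.min (2 ^+ n) (Num.sqrt G%:R) <= k%:R :> R.
Proof.
move=> scale; suff : Num.min (2 ^+ n) (Num.sqrt G%:R) <= 5 * k%:R :> R by lra.
rewrite ge_min; case/orP: scale => [le_pow|le_G]; apply/orP; [left|right].
  by rewrite -natrX -natrM ler_nat.
by rewrite -natrM -ler_sqr ?nnegrE ?sqrtr_ge0 // sqr_sqrtr // -natrX ler_nat.
Qed.

Theorem corollary4p5 (R : realType) (eps : R) :
  eps < 1 / 2 ->
  exists c : R, 0 < c /\
    forall (n G : nat), (2 <= n)%N ->
    forall L : learner R (qdim n),
      (forall hist E, 0 <= L hist E <= 1) ->
      exists U : 'M[R[i]]_(qdim n),
        unitary_class R n G U /\
        exists Es : seq 'M[R[i]]_(qdim n * qdim n),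
          (forall E, List.In E Es -> test_op R E) /\
          c * Num.min (2 ^+ n) (Num.sqrt (G%:R)) <=
            (mistakes R L (uchannel R U) eps [::] Es)%:R.
Proof.
move=> lt_eps; exists (1 / 5); split=> [|n G n_ge2 L L01]; first lra.
have [z0 [zs [z0_notin shattered scale]]] := exists_large_shattered R G n_ge2.
have [U [classU [Es [tests_Es mistakes_Es]]]] := shattered_mistakes lt_eps L01 z0_notin shattered.
by exists U; split=> //; exists Es; split=> //; rewrite mistakes_Es; exact: min_pow_sqrt_le.
Qed.
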